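(* Let $n\geq1$ and let $e\in\mathbf{I}_n(\mathcal{AW})$ have parameters $(p,q)$. Then there are exactly $p+q$ sequences in $\mathbf{I}_{n+1}(\mathcal{AW})$ whose first $n$ entries form $e$; these are $(e_1,\ldots,e_n,b)$ with $0\leq b\leq\max\{e_{n-1},e_n\}+1$, and, as $b$ runs from $0$ to $\max\{e_{n-1},e_n\}+1$, their parameters are respectively $$(1,p),(2,p-1),\ldots,(p,1),\ (p+1,1),(p+2,1),\ldots,(p+q,1).$$
   Context: $\mathbf{I}_n$ is the set of inversion sequences $e=(e_1,\ldots,e_n)$ with $0\leq e_i<i$. $\mathbf{I}_n(\mathcal{AW})$ is the set of $e\in\mathbf{I}_n$ such that $e_i\leq\max\{e_{i-2},e_{i-1}\}+1$ for every $2<i\leq n$. The parameters of $e\in\mathbf{I}_n(\mathcal{AW})$ are $(p,q)$ with $p=e_n+1$ and $q=\max\{e_{n-1},e_n\}+1-e_n$, using the convention $e_0=0$ (so the sequence $(0)$ of length $1$ has parameters $(1,1)$). *)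

(* Inversion sequences are represented as [seq nat];
   the 0-based list entry [nth 0 e k] is the paper's 1-based entry e_{k+1}. *)
From mathcomp Require Import all_boot.
Set Implicit Arguments. Unset Strict Implicit. Unset Printing Implicit Defensive.

(* Paper's 1-indexed entry e_i, with the convention e_0 = 0. *)
Definition ent (e : seq nat) (i : nat) : nat :=
  if i is k.+1 then nth 0 e k else 0.

Definition inv_seq (n : nat) (e : seq nat) : bool :=
  (size e == n) && [forall i : 'I_n, ent e i.+1 < i.+1].

Definition AW (n : nat) (e : seq nat) : bool :=
  inv_seq n e &&
  [forall i : 'I_n.+1, (2 < i) ==> (ent e i <= maxn (ent e i.-2) (ent e i.-1) + 1)].

Definition params (e : seq nat) : nat * nat :=
  let n := size e in
  (ent e n + 1, maxn (ent e n.-1) (ent e n) + 1 - ent e n).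

From mathcomp Require Import all_boot.
From mathcomp Require Import zify.

Set Implicit Arguments.
Unset Strict Implicit.
Unset Printing Implicit Defensive.

(* Appending b to e in I_n(AW) only adds the two conditions on the new last
   entry: b <= n, and b <= max{e_{n-1}, e_n} + 1 when n >= 2.  For n >= 1 the
   second bound m := max{e_{n-1}, e_n} + 1 is at most n, so the extensions are
   exactly the (e, b) with b <= m.  The new parameters are (b + 1, max{e_n, b}
   + 1 - b), which is (b + 1, p - b) for b < p = e_n + 1 and (b + 1, 1)
   otherwise. *)

Lemma forall_ord_recr (n : nat) (P : nat -> bool) :
  [forall i : 'I_n.+1, P i] = [forall i : 'I_n, P i] && P n.
Proof.
apply/forallP/andP => [H | [/forallP H Pn] i].
  by split; [apply/forallP => i; apply: H (widen_ord (leqnSn n) i) | apply: H ord_max].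
have [lt_in | ] := ltnP i n; first exact: (H (Ordinal lt_in)).
by move=> le_ni; have -> : i = n :> nat by apply/eqP; rewrite eqn_leq -ltnS ltn_ord.
Qed.

Lemma ent_rcons (e : seq nat) (b k : nat) : k <= size e -> ent (rcons e b) k = ent e k.
Proof. by case: k => [|k] //= lt_k; rewrite nth_rcons lt_k. Qed.

Lemma ent_rcons_size (e : seq nat) (b : nat) : ent (rcons e b) (size e).+1 = b.
Proof. by rewrite /= nth_rcons ltnn eqxx. Qed.

Lemma inv_seq_size (n : nat) (e : seq nat) : inv_seq n e -> size e = n.
Proof. by case/andP => /eqP. Qed.

Lemma AW_size (n : nat) (e : seq nat) : AW n e -> size e = n.
Proof. by case/andP => /inv_seq_size. Qed.

Lemma inv_seq_ent_le (n : nat) (e : seq nat) (k : nat) :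
  inv_seq n e -> k <= n -> ent e k <= k.-1.
Proof. by case/andP => _ /forallP inv_e; case: k => [|k] // lt_kn; apply: inv_e (Ordinal lt_kn). Qed.

Lemma inv_seq_rcons (e : seq nat) (b : nat) (n := size e) :
  inv_seq n.+1 (rcons e b) = inv_seq n e && (b <= n).
Proof.
rewrite /inv_seq size_rcons !eqxx /=.
rewrite (forall_ord_recr _ (fun i => ent (rcons e b) i.+1 < i.+1)) ent_rcons_size ltnS.
by congr (_ && _); apply: eq_forallb => i; rewrite ent_rcons.
Qed.

Lemma AW_rcons (e : seq nat) (b : nat) (n := size e) :
  AW n.+1 (rcons e b) =
  [&& AW n e, b <= n & (1 < n) ==> (b <= maxn (ent e n.-1) (ent e n) + 1)].
Proof.
rewrite /AW inv_seq_rcons.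
rewrite (forall_ord_recr _ (fun i => (2 < i) ==>
  (ent (rcons e b) i <= maxn (ent (rcons e b) i.-2) (ent (rcons e b) i.-1) + 1))).
rewrite ent_rcons_size !ent_rcons ?leq_pred // -!andbA.
do 2 congr (_ && _); rewrite andbCA; congr (_ && _).
apply: eq_forallb => i; have le_in : i <= n by rewrite -ltnS.
rewrite !ent_rcons //; lia.
Qed.

Lemma max_last_two_lt (n : nat) (e : seq nat) :
  0 < n -> inv_seq n e -> maxn (ent e n.-1) (ent e n) < n.
Proof.
move=> n_gt0 inv_e; have := inv_seq_ent_le inv_e (leq_pred n).
have := inv_seq_ent_le inv_e (leqnn n); lia.
Qed.

Lemma AW_rconsE (n : nat) (e : seq nat) (b : nat) :
  0 < n -> AW n e ->
  AW n.+1 (rcons e b) = (b <= maxn (ent e n.-1) (ent e n) + 1).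
Proof.
move=> n_gt0 AW_e; have size_e := AW_size AW_e.
have lt_mn := max_last_two_lt n_gt0 (andP AW_e).1.
rewrite -size_e AW_rcons size_e AW_e /=.
have [lt1n | le_n1] /= := ltnP 1 n; first by rewrite andb_idl => //; lia.
by rewrite andbT; apply/idP/idP; lia.
Qed.

Lemma params_rcons (e : seq nat) (b : nat) :
  params (rcons e b) = (b.+1, maxn (ent e (size e)) b + 1 - b).
Proof. by rewrite /params size_rcons /= -/(ent _ (size e).+1) ent_rcons_size ent_rcons ?addn1. Qed.

Lemma rcons_take_nth (n : nat) (f : seq nat) :
  size f = n.+1 -> f = rcons (take n f) (nth 0 f n).
Proof. by move=> size_f; rewrite -take_nth ?size_f // take_oversize ?size_f. Qed.

Theorem lemma5p1 (n : nat) (e : seq nat) (p q : nat) :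
  1 <= n -> AW n e -> params e = (p, q) ->
  let m := maxn (ent e n.-1) (ent e n) + 1 in
  (* the one-entry extensions of e inside I_{n+1}(AW) are exactly (e, b), 0 <= b <= m *)
  (forall f : seq nat,
      (AW n.+1 f && (take n f == e)) <-> (exists2 b, b <= m & f = rcons e b))
  (* there are exactly p + q of them *)
  /\ uniq [seq rcons e b | b <- iota 0 m.+1]
  /\ size [seq rcons e b | b <- iota 0 m.+1] = p + q
  (* their parameters, as b runs from 0 to m *)
  /\ (forall b, b <= m ->
        params (rcons e b) = (if b < p then (b.+1, p - b) else (b.+1, 1))).
Proof.
move=> n_gt0 AW_e params_e m; have size_e := AW_size AW_e.
move: params_e; rewrite {1}/params size_e => -[<- <-].
have take_e b : take n (rcons e b) = e by rewrite -size_e -cats1 take_size_cat.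
split; [|split; [|split]].
- move=> f; split => [/andP[AW_f /eqP take_f] | [b le_bm ->]].
    have f_eq := rcons_take_nth (AW_size AW_f); rewrite take_f in f_eq.
    by exists (nth 0 f n); rewrite // -(AW_rconsE _ n_gt0 AW_e) -f_eq.
  by rewrite AW_rconsE // le_bm take_e eqxx.
- by rewrite map_inj_uniq ?iota_uniq //; apply: rcons_injr.
- by rewrite size_map size_iota /m; lia.
- by move=> b _; rewrite params_rcons size_e; case: ifP => ?; congr pair; lia.
Qed.
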